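(* Let $n,m$ be positive integers, let $S\subseteq S_n$ be a subset of the symmetric group containing the identity, and let $G\le S_n$ be the subgroup generated by $S$. The player can win the $(S,m)$-game if and only if $|G|=1$, or $m=1$, or $(|G|,m)=(p^a,p^b)$ for some prime $p$ and positive integers $a,b$.
   Context: The $(S,m)$-game: $n$ counters sit at positions $1,\dots,n$ (labels fixed from the player's perspective), each showing an element of $\mathbb{Z}_m$, so a configuration is a vector in $\mathbb{Z}_m^n$. The initial configuration is arbitrary and unknown to the player. Each turn the player chooses a move $y\in\mathbb{Z}_m^n$, added coordinatewise to the configuration; then an arbitrary, adversarially chosen permutation $\sigma\in S$ (possibly different each turn) is applied to the counters: the configuration $x$ is replaced by $x'$ with $x'_{\sigma(i)}=x_i$ for all $i$. The player wins if at some moment (including initially) all counters show $0$. A strategy is a finite sequence of moves $y_1,\dots,y_N$ (the player receives no information); it is winning if for every initial configuration and every choice of permutations the configuration equals the zero vector at some time. ''The player can win'' means a winning finite sequence exists. *)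

From mathcomp Require Import all_boot all_order all_fingroup.
Set Implicit Arguments. Unset Strict Implicit. Unset Printing Implicit Defensive.
Import GroupScope.

(* Elements of Z_m are represented by natural numbers, read modulo m.
   A configuration / move is a function 'I_n -> nat (counter values mod m). *)

Definition config (n : nat) := 'I_n -> nat.

(* One turn: add the move y coordinatewise, then apply sigma to the counters:
   x'_{sigma i} = x_i, i.e. x'_j = x_{sigma^-1 j}. Values reduced mod m. *)
Definition step (n m : nat) (sigma : {perm 'I_n}) (y x : config n) : config n :=
  fun j => (x (sigma^-1 j) + y (sigma^-1 j)) %% m.

Fixpoint conf (n m : nat) (x0 : config n) (ys : seq (config n))
    (sig : nat -> {perm 'I_n}) (k : nat) : config n :=
  match k with
  | 0 => x0
  | k'.+1 => step m (sig k') (nth (fun _ => 0) ys k') (conf m x0 ys sig k')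
  end.

Definition is_zero_conf (n m : nat) (x : config n) : Prop :=
  forall i, x i %% m = 0.

Definition winning (n m : nat) (S : {set {perm 'I_n}}) (ys : seq (config n)) : Prop :=
  forall (x0 : config n) (sig : nat -> {perm 'I_n}),
    (forall k, sig k \in S) ->
    exists k, k <= size ys /\ is_zero_conf m (conf m x0 ys sig k).

Definition player_can_win (n m : nat) (S : {set {perm 'I_n}}) : Prop :=
  exists ys : seq (config n), winning m S ys.

From mathcomp Require Import all_boot all_order all_fingroup all_algebra all_solvable.
Set Implicit Arguments. Unset Strict Implicit. Unset Printing Implicit Defensive.
Import GRing.Theory.

(* Put
   L_0 = 0 and L_(i+1) = {x | x^g - x \in L_i for all g in G}; this chain of
   subgroups stabilizes at some L, and the player can win iff L is everything.
   Indeed a strategy winning from L_i, with moves in L_i, is lifted to L_(i+1)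
   by guessing in turn every class of the initial configuration modulo L_i;
   conversely, from a configuration outside L the adversary can stay outside L
   forever.  If G is a p-group and m a power of p, counting the G-fixed cosets
   of L modulo p shows that L is everything.  If instead some prime p divides
   m and an element h of G has order prime to p, then h - 1 is injective on
   the p-torsion vectors with zero h-orbit sum, so it is not nilpotent,
   whereas L = (Z_m)^n forces every h - 1 to be nilpotent. *)

Section ZmodFacts.
Variable V : zmodType.
Local Open Scope ring_scope.

Lemma subrACA (a b c d : V) : (a - b) - (c - d) = (a - c) - (b - d).
Proof. by rewrite !opprB addrACA [in RHS]addrACA [- c + _]addrC. Qed.

Lemma mulrn_coprime_eq0 (v : V) p q :
  coprime p q -> v *+ p = 0 -> v *+ q = 0 -> v = 0.
Proof.
case: p => [|p]; first by rewrite /coprime gcd0n => /eqP->.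
move=> /eqnP pq_coprime vp vq; have [a _] := @Bezoutl p.+1 q isT.
rewrite pq_coprime => /dvdnP[d Ed].
have := congr1 (GRing.natmul v) Ed.
by rewrite mulrnDr mulr1n mulnC mulrnA vq mul0rn addr0 mulnC mulrnA vp mul0rn.
Qed.

End ZmodFacts.

Section Permute.
Variables (R : zmodType) (n : nat).
Local Open Scope ring_scope.
Implicit Types (x y : {ffun 'I_n -> R}) (g h : {perm 'I_n}) (ys : seq {ffun 'I_n -> R})
  (sig : nat -> {perm 'I_n}).

Definition permute x g : {ffun 'I_n -> R} := [ffun j => x (g^-1 j)%g].

Lemma permute1 x : permute x 1 = x.
Proof. by apply/ffunP=> j; rewrite ffunE invg1 perm1. Qed.

Lemma permuteM x g h : permute x (g * h) = permute (permute x g) h.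
Proof. by apply/ffunP=> j; rewrite !ffunE invMg permM. Qed.

Lemma permute0 g : permute 0 g = 0.
Proof. by apply/ffunP=> j; rewrite !ffunE. Qed.

Lemma permuteD x y g : permute (x + y) g = permute x g + permute y g.
Proof. by apply/ffunP=> j; rewrite !ffunE. Qed.

Lemma permuteN x g : permute (- x) g = - permute x g.
Proof. by apply/ffunP=> j; rewrite !ffunE. Qed.

Lemma permuteB x y g : permute (x - y) g = permute x g - permute y g.
Proof. by rewrite permuteD permuteN. Qed.

Lemma permuteMn x g i : permute (x *+ i) g = permute x g *+ i.
Proof. by apply/ffunP=> j; rewrite !(ffunE, ffunMnE). Qed.

Definition permute_action := TotalAction permute1 permuteM.

Fixpoint play x ys sig t : {ffun 'I_n -> R} :=
  if t is t'.+1 then permute (play x ys sig t' + nth 0 ys t') (sig t') else x.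

Lemma playS x ys sig t :
  play x ys sig t.+1 = permute (play x ys sig t + nth 0 ys t) (sig t).
Proof. by []. Qed.

Lemma play_cat_prefix x ys zs sig t :
  (t <= size ys)%N -> play x (ys ++ zs) sig t = play x ys sig t.
Proof. by elim: t => //= t IH lt_t; rewrite IH ?(ltnW lt_t) // nth_cat lt_t. Qed.

Lemma play_cat x ys zs sig t :
  play x (ys ++ zs) sig (size ys + t) =
  play (play x ys sig (size ys)) zs (fun j => sig (size ys + j)%N) t.
Proof.
elim: t => [|t IH]; first by rewrite addn0 play_cat_prefix.
by rewrite addnS /= IH nth_cat ltnNge leq_addr /= addKn.
Qed.

End Permute.
Section Layers.
Variables (R : finZmodType) (n : nat) (G : {group {perm 'I_n}}).
Local Notation V := {ffun 'I_n -> R}.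
Local Open Scope ring_scope.
Implicit Types (x y z : V) (g h : {perm 'I_n}).

Fixpoint layer i : {set V} :=
  if i is i'.+1 then [set x | [forall g in G, permute x g - x \in layer i']]
  else [set 0 : V].

Lemma layerSP i x :
  reflect (forall g, g \in G -> permute x g - x \in layer i) (x \in layer i.+1).
Proof. by rewrite inE; apply: forall_inP. Qed.

Lemma layer_zmod_closed i : GRing.zmod_closed (layer i).
Proof.
elim: i => [|i [IH0 IHB]].
  by split=> [|x y]; rewrite ?inE // => /eqP-> /eqP->; rewrite subrr.
split=> [|x y /layerSP Hx /layerSP Hy]; apply/layerSP=> g Gg.
  by rewrite permute0 subrr.
by rewrite permuteB subrACA IHB ?Hx ?Hy.
Qed.

Lemma layer0 i : 0 \in layer i.
Proof. by case: (layer_zmod_closed i). Qed.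

Lemma layerB i x y : x \in layer i -> y \in layer i -> x - y \in layer i.
Proof. by case: (layer_zmod_closed i) => _; apply. Qed.

Lemma layerN i x : x \in layer i -> - x \in layer i.
Proof. by move=> Hx; rewrite -sub0r layerB ?layer0. Qed.

Lemma layerD i x y : x \in layer i -> y \in layer i -> x + y \in layer i.
Proof. by move=> Hx Hy; rewrite -[y]opprK layerB ?layerN. Qed.

Lemma layer_trans i x y z : x - y \in layer i -> y - z \in layer i -> x - z \in layer i.
Proof. by move=> Hxy Hyz; rewrite -(subrKA y) layerD. Qed.

Lemma layer_shift i (x y z w : V) :
  x - y \in layer i -> y + z - w \in layer i -> x + z - w \in layer i.
Proof. by move=> Hxy Hyzw; have := layerD Hxy Hyzw; rewrite addrA subrKA. Qed.

Lemma layer_diff i x g : g \in G -> x \in layer i.+1 -> permute x g - x \in layer i.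
Proof. by move=> Gg /layerSP; apply. Qed.

Lemma layer_permute i x g : g \in G -> x \in layer i -> permute x g \in layer i.
Proof.
elim: i x => [|i IH] x Gg; first by rewrite !inE => /eqP->; rewrite permute0.
move=> /layerSP Hx; apply/layerSP=> h Gh.
have -> : permute (permute x g) h - permute x g
          = (permute x (g * h) - x) - (permute x g - x).
  by rewrite permuteM opprB addrA subrK.
by rewrite layerB ?Hx ?groupM.
Qed.

Lemma layer_subS i : layer i \subset layer i.+1.
Proof.
elim: i => [|i IH]; apply/subsetP=> x; first by rewrite inE => /eqP->; apply: layer0.
by move=> /layerSP Hx; apply/layerSP=> g Gg; apply: (subsetP IH); apply: Hx.
Qed.

Lemma layer_sub i j : (i <= j)%N -> layer i \subset layer j.
Proof.
move=> /subnKC <-; elim: (j - i)%N => [|d IH]; first by rewrite addn0.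
by rewrite addnS (subset_trans IH (layer_subS _)).
Qed.

Lemma layer_stableS i : layer i = layer i.+1 -> layer i.+1 = layer i.+2.
Proof. by move=> E; apply/setP=> x; apply/layerSP/layerSP=> H g /H; rewrite E. Qed.

Definition top_layer := layer #|V|.

Lemma layerS_top : layer #|V|.+1 = top_layer.
Proof.
suff: (layer #|V| == layer #|V|.+1) || (#|V| < #|layer #|V| |)%N.
  by rewrite ltnNge max_card orbF => /eqP.
elim: #|V| => [|i]; first by rewrite cards1 orbT.
have [E _|NE /= Hi] := eqVneq (layer i) (layer i.+1).
  by rewrite (layer_stableS E) eqxx.
by rewrite (leq_ltn_trans Hi) ?orbT // proper_card // properEneq NE layer_subS.
Qed.

Lemma layer_iter i x g :
  g \in G -> x \in layer i -> iter i (fun v => permute v g - v) x = 0.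
Proof.
elim: i x => [|i IH] x Gg; first by rewrite inE => /eqP.
by move=> Hx; rewrite iterSr IH ?layer_diff.
Qed.

Lemma top_layer_trivial : #|G| = 1%N -> top_layer = [set: V].
Proof.
move=> G1; apply/eqP; rewrite eqEsubset subsetT /=.
have V_gt0 : (0 < #|V|)%N by apply/card_gt0P; exists 0.
apply: subset_trans (layer_sub V_gt0); apply/subsetP=> x _; apply/layerSP=> g Gg.
have G_1 : G :=: 1%g by apply/eqP; rewrite trivg_card1 G1.
by move: Gg; rewrite G_1 inE => /eqP->; rewrite permute1 subrr layer0.
Qed.

End Layers.

Section TopCosets.
Variables (R : finZmodType) (n : nat) (G : {group {perm 'I_n}}).
Local Notation V := {ffun 'I_n -> R}.
Local Open Scope group_scope.
Local Open Scope ring_scope.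
Local Notation top := (top_layer R G).
Local Notation to := (permute_action R n).
Implicit Types (x y : V) (g : {perm 'I_n}).

Definition top_coset x : {set V} := [set y : V | y - x \in top].

Definition top_cosets := [set top_coset x | x : V].

Lemma top_coset_eq x y : (top_coset x == top_coset y) = (x \in top_coset y).
Proof.
apply/eqP/idP => [<-|]; first by rewrite inE subrr layer0.
rewrite inE => Hxy; apply/setP=> z; rewrite !inE; apply/idP/idP => Hz.
  exact: layer_trans Hz Hxy.
by rewrite (layer_trans Hz) // -opprB layerN.
Qed.

Lemma card_top_coset x : #|top_coset x| = #|top|.
Proof.
have -> : top_coset x = (fun y => y - x) @^-1: top by apply/setP=> y; rewrite !inE.
by apply: card_preimset; apply: addIr.
Qed.

Lemma top_cosets_partition : partition top_cosets [set: V].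
Proof.
suff -> : top_cosets = preim_partition top_coset [set: V] by apply: preim_partitionP.
have E x : top_coset x = [set y in [set: V] | top_coset x == top_coset y].
  by apply/setP=> y; rewrite [RHS]inE in_setT eq_sym top_coset_eq.
by apply/setP=> A; apply/imsetP/imsetP=> -[x _ ->]; exists x; rewrite -?E.
Qed.

Lemma card_top_cosets : #|[set: V]| = (#|top_cosets| * #|top|)%N.
Proof.
apply: card_uniform_partition top_cosets_partition.
by move=> _ /imsetP[x _ ->]; apply: card_top_coset.
Qed.

Lemma setact_top_coset x g :
  g \in G -> (to^*)%act (top_coset x) g = top_coset (permute x g).
Proof.
move=> Gg; rewrite /= setactE; apply/setP=> y; rewrite [RHS]inE.
apply/imsetP/idP => [[z Hz ->]|Hy].
  by rewrite inE in Hz; rewrite /= -permuteB layer_permute.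
exists (permute y g^-1%g); last by rewrite /= -permuteM mulVg permute1.
rewrite inE; have -> : permute y g^-1%g - x = permute (y - permute x g) g^-1%g.
  by rewrite permuteB -permuteM mulgV permute1.
by rewrite layer_permute ?groupV.
Qed.

Lemma acts_top_cosets : [acts G, on top_cosets | to^*].
Proof.
apply/actsP=> g Gg A; apply/imsetP/imsetP => -[x _ EA].
  exists (permute x g^-1%g) => //.
  by rewrite -[A](actK to^* g) EA setact_top_coset ?groupV.
by exists (permute x g); rewrite // EA setact_top_coset.
Qed.

Lemma top_coset_fixed x :
  top_coset x \in 'Fix_(top_cosets | to^*)(G) -> x \in top.
Proof.
rewrite inE => /andP[_ /afixP Hfix]; rewrite -layerS_top; apply/layerSP=> g Gg.
by have /eqP := Hfix g Gg; rewrite setact_top_coset // top_coset_eq inE.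
Qed.

Lemma top_cosets_gt1 x : x \notin top -> (1 < #|top_cosets|)%N.
Proof.
move=> Nx; rewrite (cardsD1 (top_coset 0)) imset_f // ltnS; apply/card_gt0P.
by exists (top_coset x); rewrite !inE imset_f // andbT top_coset_eq inE subr0.
Qed.

Lemma top_layer_pgroup p :
  prime p -> p.-group G -> p.-nat #|V| -> top = [set: V].
Proof.
move=> p_pr pG pV; apply/eqP; rewrite eqEsubset subsetT /=.
apply/subsetP=> x1 _; apply/negPn/negP=> /top_cosets_gt1 cosets_gt1.
pose Fix := 'Fix_(top_cosets | to^*)(G).
have p_cosets : (p %| #|top_cosets|)%N.
  have [e He] : {e | #|top_cosets| = p ^ e}%N.
    by apply: p_natP; apply: pnat_dvd pV; rewrite -cardsT card_top_cosets dvdn_mulr.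
  by move: cosets_gt1; rewrite He; case: e {He} => // e _; rewrite expnS dvdn_mulr.
have p_fix : (p %| #|Fix|)%N.
  by rewrite /dvdn -(pgroup_fix_mod pG acts_top_cosets) -/(dvdn _ _).
have fix0 : top_coset 0 \in Fix.
  rewrite inE imset_f //=; apply/afixP=> g Gg.
  by rewrite setact_top_coset // permute0.
have [A FixA NA] : exists2 A, A \in Fix & A != top_coset 0.
  have : (1 < #|Fix|)%N.
    rewrite (leq_trans (prime_gt1 p_pr)) // dvdn_leq //.
    by apply/card_gt0P; exists (top_coset 0).
  rewrite (cardsD1 (top_coset 0)) fix0 ltnS => /card_gt0P[A].
  by rewrite in_setD1 => /andP[]; exists A.
have /imsetP[x _ Ax] : A \in top_cosets by move: FixA; rewrite inE => /andP[].
move: FixA NA; rewrite Ax => /top_coset_fixed Hx.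
by rewrite top_coset_eq inE subr0 Hx.
Qed.

End TopCosets.

Section CoprimeOrder.
Variables (R : finZmodType) (n : nat) (G : {group {perm 'I_n}}).
Local Notation V := {ffun 'I_n -> R}.
Local Open Scope group_scope.
Local Open Scope ring_scope.
Implicit Types (v : V) (h : {perm 'I_n}).

Lemma sum_permute_cycle_diff v h :
  \sum_(0 <= j < #[h]) permute (permute v h - v) (h ^+ j) = 0.
Proof.
under eq_bigr do rewrite permuteB -permuteM -expgS.
by rewrite telescope_sumr // expg_order expg0 permute1 subrr.
Qed.

Lemma sum_permute_cycle_fixed v h :
  permute v h = v -> \sum_(0 <= j < #[h]) permute v (h ^+ j) = v *+ #[h].
Proof.
move=> hv; rewrite (eq_bigr (fun=> v)) => [|j _]; first by rewrite sumr_const_nat subn0.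
by elim: j => [|j IH]; rewrite ?expg0 ?permute1 // expgSr permuteM IH.
Qed.

Lemma top_layer_full_coprime p (c : R) h :
  top_layer R G = [set: V] -> h \in G -> h != 1%g -> c != 0 -> c *+ p = 0 ->
  ~~ coprime p #[h].
Proof.
move=> top_full Gh h_ne1 c_ne0 cp; apply/negP=> p_h.
pose T v := permute v h - v.
(* Since p and #[h] are coprime, T is injective on good vectors. *)
pose good v := [/\ v *+ p = 0, \sum_(0 <= j < #[h]) permute v (h ^+ j) = 0 & v != 0].
have T_good v : good v -> good (T v).
  case=> vp vsum v_ne0; split; [|exact: sum_permute_cycle_diff|].
    by rewrite /T mulrnBl -permuteMn vp permute0 subrr.
  apply: contra v_ne0; rewrite /T subr_eq0 => /eqP hv; apply/eqP.
  by apply: (mulrn_coprime_eq0 p_h vp); rewrite -sum_permute_cycle_fixed.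
have [i0 hi0] : exists i0, h i0 != i0.
  apply/existsP; apply: contraR h_ne1 => /existsPn fixh.
  by apply/eqP/permP=> i; rewrite perm1; apply/eqP/negPn.
pose e : V := [ffun i => if i == i0 then c else 0].
have Te_good : good (T e).
  split; [|exact: sum_permute_cycle_diff|].
    have ep : e *+ p = 0.
      by apply/ffunP=> i; rewrite ffunMnE !ffunE; case: ifP; rewrite ?cp ?mul0rn.
    by rewrite /T mulrnBl -permuteMn ep permute0 subrr.
  apply/eqP=> /ffunP/(_ i0); rewrite !ffunE eqxx.
  have -> : (h^-1%g i0 == i0) = false.
    by apply: contraNF hi0 => /eqP{1}<-; rewrite permKV.
  by rewrite sub0r => /eqP; rewrite oppr_eq0 (negbTE c_ne0).
have iter_good t : good (iter t T (T e)) by elim: t => //= t; apply: T_good.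
have [_ _] := iter_good #|V|; rewrite -iterSr (layer_iter Gh) ?eqxx //.
by rewrite layerS_top top_full inE.
Qed.

End CoprimeOrder.

Section Game.
Variables (R : finZmodType) (n : nat) (S : {set {perm 'I_n}}).
Local Notation V := {ffun 'I_n -> R}.
Local Open Scope group_scope.
Local Open Scope ring_scope.
Local Notation L := (layer R <<S>>%G).
Local Notation top := (top_layer R <<S>>%G).
Implicit Types (x : V) (ys : seq V) (sig : nat -> {perm 'I_n}).

Definition wins_on (M : {set V}) ys := forall x0, x0 \in M ->
  forall sig, (forall t, sig t \in S) ->
  exists2 t, (t <= size ys)%N & play x0 ys sig t = 0.

Lemma nth_layer i ys t : {subset ys <= L i} -> nth 0 ys t \in L i.
Proof.
move=> ys_sub; have [lt_t|le_t] := ltnP t (size ys); first exact/ys_sub/mem_nth.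
by rewrite nth_default ?layer0.
Qed.

Lemma play_layer i x ys sig :
  (forall t, sig t \in S) -> {subset ys <= L i} -> x \in L i.+1 ->
  forall t, play x ys sig t \in L i.+1 /\ play x ys sig t - x \in L i.
Proof.
move=> sigS ys_sub x_in; elim=> [|t [IH1 IH2]]; first by rewrite subrr layer0.
have y_in := nth_layer t ys_sub.
have w_in : play x ys sig t + nth 0 ys t \in L i.+1.
  by rewrite layerD // (subsetP (layer_subS _ _ i)).
have Gsig : sig t \in <<S>> := mem_gen (sigS t).
rewrite playS layer_permute //; split=> //.
by rewrite (layer_trans (layer_diff Gsig w_in)) // addrAC layerD.
Qed.

(* Playing [prev - c] trades the previous guess [prev] for the guess [c] of the
   class of the initial configuration modulo [L i]; after the right guess the
   configuration lies in [L i], where [s] wins. *)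
Fixpoint guess_moves (s : seq V) (prev : V) (cs : seq V) : seq V :=
  if cs is c :: cs' then (prev - c) :: s ++ guess_moves s c cs' else [::].

Lemma guess_moves_sub i s prev cs : {subset s <= L i} -> prev \in L i.+1 ->
  {subset cs <= L i.+1} -> {subset guess_moves s prev cs <= L i.+1}.
Proof.
move=> s_sub; elim: cs prev => // c cs IH prev prev_in cs_sub y.
have c_in := cs_sub c (mem_head c cs).
rewrite in_cons mem_cat => /or3P[/eqP->|/s_sub/(subsetP (layer_subS _ _ i))//|].
  exact: layerB.
by apply: IH => // z z_in; apply/cs_sub/mem_behead.
Qed.

Lemma guess_moves_wins i s : {subset s <= L i} -> wins_on (L i) s ->
  forall cs prev x x0 sig, {subset cs <= L i.+1} -> prev \in L i.+1 ->
  x \in L i.+1 -> x0 \in cs -> x + prev - x0 \in L i -> (forall t, sig t \in S) ->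
  exists2 t, (t <= size (guess_moves s prev cs))%N &
             play x (guess_moves s prev cs) sig t = 0.
Proof.
move=> s_sub s_wins; elim=> // c cs IH prev x x0 sig cs_sub prev_in x_in.
move=> x0_in inv sigS.
pose sig1 j := sig (1 + j)%N.
have sig1S t : sig1 t \in S by apply: sigS.
set w := x + (prev - c); set x1 := permute w (sig 0%N).
have c_in := cs_sub c (mem_head c cs).
have w_in : w \in L i.+1 by rewrite layerD ?layerB.
have Gsig0 : sig 0%N \in <<S>> := mem_gen (sigS 0%N).
have x1_in : x1 \in L i.+1 by rewrite layer_permute.
have inv1 : x1 + c - x0 \in L i.
  by rewrite (layer_shift (layer_diff Gsig0 w_in)) // /w -[x + _ + c]addrA subrK.
have play1 t : play x (guess_moves s prev (c :: cs)) sig (1 + t) =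
               play x1 (s ++ guess_moves s c cs) sig1 t.
  exact: (play_cat x [:: prev - c]).
have [c_x0|ne_cx0] := eqVneq c x0.
  rewrite c_x0 addrK in inv1.
  have [t le_t play_t] := s_wins x1 inv1 sig1 sig1S.
  exists (1 + t)%N; last by rewrite play1 play_cat_prefix.
  by rewrite /= add1n ltnS size_cat (leq_trans le_t (leq_addr _ _)).
have x0_in' : x0 \in cs by move: x0_in; rewrite in_cons eq_sym (negbTE ne_cx0).
pose x2 := play x1 s sig1 (size s).
have [x2_in x2_x1] := play_layer sig1S s_sub x1_in (size s).
have inv2 : x2 + c - x0 \in L i := layer_shift x2_x1 inv1.
pose sig2 j := sig1 (size s + j)%N.
have cs_sub' : {subset cs <= L i.+1} by move=> z z_in; apply/cs_sub/mem_behead.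
have [t le_t play_t] := IH c x2 x0 sig2 cs_sub' c_in x2_in x0_in' inv2 (fun t => sigS _).
exists (1 + (size s + t))%N; first by rewrite /= add1n ltnS size_cat leq_add2l.
by rewrite play1 play_cat.
Qed.

Lemma layer_strategy i : exists2 ys, {subset ys <= L i} & wins_on (L i) ys.
Proof.
elim: i => [|i [s s_sub s_wins]].
  by exists [::] => // x0; rewrite inE => /eqP-> sig _; exists 0%N.
have enum_sub : {subset enum (L i.+1) <= L i.+1} by move=> y; rewrite mem_enum.
exists (guess_moves s 0 (enum (L i.+1))); first exact: guess_moves_sub (layer0 _ _ _) _.
move=> x0 x0_in sig sigS.
apply: (guess_moves_wins (x0 := x0) s_sub s_wins enum_sub (layer0 _ _ _) x0_in) => //.
  by rewrite mem_enum.
by rewrite addr0 subrr layer0.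
Qed.

Hypothesis S1 : 1%g \in S.

Lemma top_escape x :
  x \notin top -> exists2 g, g \in S & permute x g^-1 - x \notin top.
Proof.
move=> x_out; apply/exists_inP; apply: contraR x_out => /exists_inPn stay.
have H_group : group_set [set h in <<S>> | permute x h - x \in top].
  apply/group_setP; split=> [|a b]; first by rewrite inE group1 permute1 subrr layer0.
  rewrite !inE => /andP[Ga Ha] /andP[Gb Hb]; rewrite groupM //=.
  have -> : permute x (a * b) - x = permute (permute x a - x) b + (permute x b - x).
    by rewrite permuteB -permuteM subrKA.
  by rewrite layerD ?layer_permute.
have S_H : <<S>> \subset Group H_group.
  rewrite gen_subG; apply/subsetP=> g Sg; rewrite -[g]invgK groupV inE groupV mem_gen //=.
  exact/negbNE/stay.
rewrite -layerS_top; apply/layerSP=> g Gg.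
by have := subsetP S_H g Gg; rewrite inE => /andP[].
Qed.

Lemma top_adversary ys : top != [set: V] ->
  exists x0, exists2 sig, (forall t, sig t \in S) &
    forall t, (t <= size ys)%N -> play x0 ys sig t \notin top.
Proof.
(* The initial configuration is built backwards from the end of the game. *)
move=> top_ne; elim: ys => [|y ys [x1 [sig sigS x1_out]]].
  move: top_ne; rewrite -properT => /properP[_ [x0 _ x0_out]].
  by exists x0, (fun=> 1%g) => // t; rewrite leqn0 => /eqP->.
have [g Sg x0_out] : exists2 g, g \in S & permute x1 g^-1 - y \notin top.
  have [x1y_in|x1y_out] := boolP (x1 - y \in top); last first.
    by exists 1%g; rewrite ?invg1 ?permute1.
  have [g Sg out] := top_escape (x1_out 0%N isT); exists g => //.
  by apply: contra out => in_top; rewrite (layer_trans in_top) // -opprB layerN.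
exists (permute x1 g^-1 - y), (fun t => if t is t'.+1 then sig t' else g) => [[]//|].
case=> [_ //|t le_t]; rewrite -[y :: ys]/([:: y] ++ ys) (play_cat _ [:: y]) /=.
by rewrite subrK -permuteM mulVg permute1; apply: x1_out.
Qed.

Lemma winning_top_layer : (exists ys, wins_on [set: V] ys) <-> top = [set: V].
Proof.
split=> [[ys ys_wins]|top_full]; last first.
  by have [ys _] := layer_strategy #|V|; rewrite -/top top_full; exists ys.
apply/eqP; apply: contraT => /(top_adversary ys)[x0 [sig sigS x0_out]].
have [t le_t play0] := ys_wins x0 (in_setT x0) sig sigS.
by have := x0_out t le_t; rewrite play0 layer0.
Qed.

End Game.

Section ZpTorsion.
Variable m : nat.
Hypothesis m_gt1 : (1 < m)%N.
Local Open Scope ring_scope.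

Lemma Zp_elem_of_prime_order p :
  prime p -> (p %| m)%N -> exists2 c : 'Z_m, c != 0 & c *+ p = 0.
Proof.
move=> p_pr p_m; exists (m %/ p)%:R; last by rewrite -mulrnA divnK // pchar_Zp.
apply/eqP=> /(congr1 (@nat_of_ord _)).
rewrite (val_Zp_nat m_gt1) modn_small ?ltn_Pdiv ?prime_gt1 ?(ltnW m_gt1) //.
by move/eqP; apply/negP; rewrite -lt0n divn_gt0 ?prime_gt0 // dvdn_leq // ltnW.
Qed.

End ZpTorsion.

Section ZpGame.
Variables (k n : nat) (S : {set {perm 'I_n}}).
(* Since m >= 2, ['Z_m] is really the ring Z/mZ. *)
Local Notation m := k.+2.
Local Notation V := {ffun 'I_n -> 'Z_m}.
Local Open Scope ring_scope.

Definition to_Zp (x : config n) : V := [ffun j => inZp (x j)].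

Definition of_Zp (v : V) : config n := fun j => v j.

Lemma to_ZpK : cancel of_Zp to_Zp.
Proof. by move=> v; apply/ffunP=> j; rewrite ffunE valZpK. Qed.

Lemma nth_map_to_Zp ys t : nth 0 (map to_Zp ys) t = to_Zp (nth (fun=> 0%N) ys t).
Proof.
have [lt_t|le_t] := ltnP t (size ys); first by rewrite (nth_map (fun=> 0%N)).
by rewrite !nth_default ?size_map //; apply/ffunP=> j; rewrite !ffunE; apply: val_inj.
Qed.

Lemma to_Zp_conf x0 ys sig t :
  to_Zp (conf m x0 ys sig t) = play (to_Zp x0) (map to_Zp ys) sig t.
Proof.
elim: t => //= t <-; rewrite nth_map_to_Zp; apply/ffunP=> j.
by rewrite !ffunE; apply: val_inj; rewrite /= !modn_mod modnDm.
Qed.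

Lemma is_zero_confE x : is_zero_conf m x <-> to_Zp x = 0.
Proof.
split=> [x0 | /ffunP x0 i].
  by apply/ffunP=> j; apply: val_inj; rewrite !ffunE /= x0.
by have := congr1 val (x0 i); rewrite !ffunE.
Qed.

Lemma player_can_win_Zp : player_can_win m S <-> exists ys, wins_on S [set: V] ys.
Proof.
split=> [[ys ys_win] | [ys ys_win]].
  exists (map to_Zp ys) => x0 _ sig sigS.
  have [t [le_t /is_zero_confE]] := ys_win (of_Zp x0) sig sigS.
  by rewrite to_Zp_conf to_ZpK size_map; exists t.
exists (map of_Zp ys) => x0 sig sigS.
have [t le_t play0] := ys_win (to_Zp x0) (in_setT _) sig sigS.
exists t; rewrite size_map; split=> //; apply/is_zero_confE.
by rewrite to_Zp_conf -map_comp (eq_map to_ZpK) map_id.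
Qed.

End ZpGame.

Section Characterization.
Variables (k n : nat) (S : {set {perm 'I_n}}).
Local Notation m := k.+2.
Local Notation top := (top_layer 'Z_m <<S>>%G).
Local Open Scope group_scope.
Local Open Scope ring_scope.

Lemma top_layer_Zp_prime p r : top = [set: {ffun 'I_n -> 'Z_m}] ->
  prime p -> (p %| m)%N -> prime r -> (r %| #|<<S>>|)%N -> r = p.
Proof.
move=> top_full p_pr p_m r_pr r_G.
have [c c_ne0 cp] := @Zp_elem_of_prime_order m isT p p_pr p_m.
have [h Gh oh] := Cauchy r_pr r_G.
have h_ne1 : h != 1%g by rewrite -order_gt1 oh prime_gt1.
have := top_layer_full_coprime top_full Gh h_ne1 c_ne0 cp.
by rewrite oh prime_coprime // dvdn_prime2 // negbK => /eqP.
Qed.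

Lemma top_layer_Zp_full : top = [set: {ffun 'I_n -> 'Z_m}] <->
  #|<<S>>| = 1%N \/
  exists p a b, [/\ prime p, 0 < a, 0 < b, #|<<S>>| = p ^ a & m = p ^ b]%N.
Proof.
split=> [top_full | [G1 | [p [a [b [p_pr _ _ oG om]]]]]]; last 2 first.
- exact: top_layer_trivial.
- apply: (top_layer_pgroup p_pr); first by rewrite /pgroup oG pnatX pnat_id.
  by rewrite card_ffun !card_ord om -expnM pnatX pnat_id.
have [G1|G_neq1] := eqVneq #|<<S>>| 1%N; [by left | right].
pose p := pdiv m; have p_pr : prime p by apply: pdiv_prime.
have pG : p.-nat #|<<S>>|.
  apply/pnatP=> // r r_pr r_G.
  by rewrite inE (top_layer_Zp_prime top_full p_pr (pdiv_dvd m) r_pr r_G).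
have [q q_pr q_G] : exists2 q, prime q & (q %| #|<<S>>|)%N.
  have G_gt1 : (1 < #|<<S>>|)%N by rewrite ltn_neqAle eq_sym G_neq1 cardG_gt0.
  by exists (pdiv #|<<S>>|); [apply: pdiv_prime | apply: pdiv_dvd].
have qp : q = p := top_layer_Zp_prime top_full p_pr (pdiv_dvd m) q_pr q_G.
have pm : p.-nat m.
  apply/pnatP=> // r r_pr r_m.
  by rewrite inE -qp (top_layer_Zp_prime top_full r_pr r_m q_pr q_G).
have [[|a] oG] := p_natP pG; first by rewrite oG in G_neq1.
have [[|b] om] := p_natP pm; first by rewrite expn0 in om.
by exists p, a.+1, b.+1.
Qed.

End Characterization.

Theorem theorem1p2 (n m : nat) (S : {set {perm 'I_n}}) :
  0 < n -> 0 < m -> (1%g \in S) ->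
  player_can_win m S <->
  (#|<<S>>%g| = 1 \/ m = 1 \/
   exists p a b, [/\ prime p, 0 < a, 0 < b, #|<<S>>%g| = p ^ a & m = p ^ b]).
Proof.
move=> _; case: m => [//|[_ _|k _ S1]].
  split=> [_|_]; first by right; left.
  by exists [::] => x0 sig _; exists 0; split=> // i; rewrite modn1.
apply: iff_trans (player_can_win_Zp _ _) _.
apply: iff_trans (winning_top_layer _ S1) _.
apply: iff_trans (top_layer_Zp_full _ _) _.
by split=> [[]|[|[]]]; auto.
Qed.
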